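(* Let $a,b$ be integers with $0<b<a$, let $S=\langle a,a+1,\ldots,a+b\rangle$ with conductor $c$, and let $m\ge 2c-1$. Let $q$ be a positive integer with $qb<a$. Then $\mathrm D(m+qa+qb)\cap[m,\infty)$ is an ordered amenable set (that is, an ordered $(S,m,r)$-amenable set, where $r$ is its cardinality).
   Context: For $x\in S$, $\mathrm D(x)=\{\alpha\in S\mid x-\alpha\in S\}$. A set $M=\{m_1<\cdots<m_r\}\subseteq S$ with $2c-1\le m=m_1$ is $(S,m,r)$-amenable if $\mathrm D(m_i)\cap[m,\infty)\subseteq M$ for all $i$. The ground is $\{m,m+1,\ldots,m+a+b-1\}$, and the shadow of $M$ is $M\cap\{m,\ldots,m+a+b-1\}$. For a finite $M\subseteq S\cap[m,\infty)$, let $J$ be the set of $j\in\{0,\ldots,a-1\}$ such that $x-(m+b)=qa+j$ for some $x\in M$ and some integer $q\ge 0$; if $J\neq\emptyset$ let $j_0=\max J$ and let the wagon of $M$ be $W=\{x\in M\mid x-(m+b)=qa+j_0\text{ for some integer }q\}$. An element $P\in M$ is the pivot of $M$ if either $P<m+b$ and $P=\max M$, or $P=\max W$. An $(S,m,r)$-amenable set $M$ with pivot $P$ is ordered amenable if (i) its shadow is $\{m,m+1,\ldots,m+t\}$ for some integer $0\le t<a+b-1$, and (ii) whenever $s\in S\setminus M$ is such that $M\cup\{s\}$ is $(S,m,r+1)$-amenable with the same shadow as $M$, we have $s=P+a$. *)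

From HB Require Import structures.
From mathcomp Require Import all_boot all_order all_algebra.
From mathcomp Require Import finmap.
Set Implicit Arguments. Unset Strict Implicit. Unset Printing Implicit Defensive.
Local Open Scope fset_scope.

Definition inS (a b x : nat) : Prop :=
  exists s : seq nat, all (fun g => (a <= g <= a + b)%N) s /\ sumn s = x.

Definition is_conductor (a b c : nat) : Prop :=
  (forall x, (c <= x)%N -> inS a b x) /\
  (forall c', (forall x, (c' <= x)%N -> inS a b x) -> (c <= c')%N).

Definition inD (a b x alpha : nat) : Prop :=
  inS a b alpha /\ (alpha <= x)%N /\ inS a b (x - alpha).

Definition amenable (a b c m : nat) (M : {fset nat}) (r : nat) : Prop :=
  (2 * c - 1 <= m)%N /\ #|` M| = r /\
  (forall x, x \in M -> inS a b x) /\
  m \in M /\ (forall x, x \in M -> (m <= x)%N) /\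
  (forall mi, mi \in M -> forall y, inD a b mi y -> (m <= y)%N -> y \in M).

Definition shadow (a b m : nat) (M : {fset nat}) : {fset nat} :=
  [fset x in M | (x < m + a + b)%N].

Definition inJ (a b m : nat) (M : {fset nat}) (j : nat) : Prop :=
  (j < a)%N /\ exists x q : nat, x \in M /\ x = (m + b + q * a + j)%N.

Definition in_wagon (a b m : nat) (M : {fset nat}) (x : nat) : Prop :=
  exists j0 : nat,
    inJ a b m M j0 /\ (forall j, inJ a b m M j -> (j <= j0)%N) /\
    x \in M /\
    exists q : int, (x%:Z - (m + b)%:Z = q * a%:Z + j0%:Z)%R.

Definition is_pivot (a b m : nat) (M : {fset nat}) (P : nat) : Prop :=
  ((P < m + b)%N /\ P \in M /\ (forall x, x \in M -> (x <= P)%N)) \/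
  (in_wagon a b m M P /\ (forall x, in_wagon a b m M x -> (x <= P)%N)).

Definition ordered_amenable (a b c m : nat) (M : {fset nat}) (r : nat) : Prop :=
  amenable a b c m M r /\
  exists P, is_pivot a b m M P /\
    (exists t, (t < a + b - 1)%N /\
       forall x, x \in shadow a b m M <-> (m <= x <= m + t)%N) /\
    (forall s, inS a b s -> s \notin M ->
       amenable a b c m (M `|` [fset s]) r.+1 ->
       shadow a b m (M `|` [fset s]) = shadow a b m M ->
       s = (P + a)%N).

(* Write N = m + q(a + b). An element of S = <a, ..., a + b> is a sum of k
   generators, so S is the union of the windows [k a, k (a + b)]; in particular
   S misses the gaps (k (a + b), (k + 1) a). The set M consists of the x >= m
   with N - x in S, and additivity of S makes it closed under D. Since q b < a,
   the gap below q a shows that N - x in S with x - m < a + b forces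
   x - m <= q b: this gives the shadow {m, ..., m + q b}, and the same bound
   for x - (m + b) = q' a + j gives j <= (q - 1) b, attained by m + q b and
   by N = max M, which is therefore the pivot. Finally, an element s that could be added to M with
   the same shadow would drag s - a and s - a - b into M; two elements
   v = N - (s - a) and v + b of S below q (a + b) force v - a = N - s into S,
   i.e. s in M. So no such s exists and condition (ii) holds vacuously. *)

From HB Require Import structures.
From mathcomp Require Import all_boot all_order all_algebra.
From mathcomp Require Import finmap zify.
Set Implicit Arguments. Unset Strict Implicit.
Local Open Scope fset_scope.
Local Open Scope nat_scope.

Section Windows.

Variables a b : nat.

Lemma inS_interval x : inS a b x <-> exists k, k * a <= x <= k * (a + b).
Proof.
split.
- case=> s [gen_s <-]; elim: s gen_s => [|g s IHs] /=; first by exists 0.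
  case/andP=> /andP[ag gab] /IHs[k hk]; exists k.+1; rewrite !mulSn; lia.
- case=> k; elim: k x => [|k IHk] x hx; first by exists [::]; split => //=; lia.
  set g := a + minn b (x - k.+1 * a).
  have [s [gen_s sum_s]] : inS a b (x - g).
    by apply: IHk; move: hx; rewrite /g !mulSn; lia.
  exists (g :: s); split; last by rewrite /= sum_s; move: hx; rewrite /g !mulSn; lia.
  by rewrite /= gen_s andbT /g; lia.
Qed.

Lemma inS_mul_a k : inS a b (k * a).
Proof. by apply/inS_interval; exists k; rewrite mulnDr; lia. Qed.

Lemma inS_add x y : inS a b x -> inS a b y -> inS a b (x + y).
Proof.
move=> /inS_interval[k hk] /inS_interval[l hl]; apply/inS_interval.
by exists (k + l); rewrite !mulnDl; lia.
Qed.

Lemma inS_gap k x : inS a b x -> k * (a + b) < x -> k.+1 * a <= x.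
Proof.
case/inS_interval=> j /andP[jax xjab] kx.
have kj : k < j.
  rewrite ltnNge; apply/negP=> jk; move: kx; rewrite ltnNge.
  by rewrite (leq_trans xjab) // leq_mul2r jk orbT.
by apply: leq_trans jax; rewrite leq_mul2r kj orbT.
Qed.

Lemma inS_lt_a x : inS a b x -> x < a -> x = 0.
Proof.
move=> Sx xa; have := @inS_gap 0 x Sx; rewrite mul0n mul1n; lia.
Qed.

Lemma inS_top_window p z w :
  inS a b z -> z + w = p.+1 * (a + b) -> w < a + b -> w <= p.+1 * b.
Proof.
move=> Sz zw wab; have := @inS_gap p z Sz.
by rewrite !mulSn !mulnDr in zw *; lia.
Qed.

Lemma inS_sub_a p v : 0 < b -> p.+1 * b < a ->
  inS a b v -> inS a b (v + b) -> v + b <= p.+1 * (a + b) ->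
  a <= v /\ inS a b (v - a).
Proof.
move=> b_gt0 pba Sv Svb vb_le; case/inS_interval: (Sv) => [[|k]] /andP[kav vkab].
  have ba : b < a by move: pba; rewrite mulSn; lia.
  by move: (inS_lt_a Svb); rewrite (_ : v = 0) //; lia.
suff vak : v - a <= k * (a + b).
  by split; [|apply/inS_interval; exists k]; move: kav; rewrite mulSn; lia.
rewrite leqNgt; apply/negP=> gt.
have big : k.+1 * (a + b) < v + b by rewrite mulSn; lia.
have kp : k.+1 < p.+1.
  by rewrite -(@ltn_pmul2r (a + b)) ?(leq_trans big) //; lia.
have kbp : k.+2 * b <= p.+1 * b by rewrite leq_mul2r kp orbT.
have := inS_gap Svb big.
by move: vkab kbp pba; rewrite !mulSn !mulnDr; lia.
Qed.

End Windows.

Section DivisorSet.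

Variables (a b c m p : nat) (M : {fset nat}).
Hypotheses (b_gt0 : 0 < b) (pba : p.+1 * b < a).
Hypotheses (hc : is_conductor a b c) (hm : 2 * c - 1 <= m).

Local Notation top := (m + p.+1 * a + p.+1 * b).

Hypothesis hM : forall x, x \in M <-> (m <= x /\ inD a b top x).

Lemma inS_ge_m x : m <= x -> inS a b x.
Proof. by move=> mx; apply: hc.1; lia. Qed.

Lemma in_M x : x \in M <-> [/\ m <= x, x <= top & inS a b (top - x)].
Proof.
rewrite hM; split; first by case=> mx [_ [xtop Stx]].
by case=> mx xtop Stx; do !split => //; apply: inS_ge_m.
Qed.

Lemma window_in_M x :
  m <= x -> p.+1 * a <= top - x <= p.+1 * (a + b) -> x \in M.
Proof.
move=> mx hx; apply/in_M; split => //; first by move: hx; rewrite mulnDr; lia.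
by apply/inS_interval; exists p.+1.
Qed.

Lemma top_in_M : top \in M.
Proof.
apply/in_M; split; rewrite ?subnn //; first lia.
by apply/inS_interval; exists 0.
Qed.

Lemma M_amenable : amenable a b c m M #|` M|.
Proof.
do 3!split => //; first by move=> x /in_M[mx _ _]; exact: inS_ge_m.
split; first by apply: window_in_M => //; rewrite mulnDr; lia.
split; first by move=> x /in_M[].
move=> x /in_M[mx xtop Sx] y [Sy [yx Sxy]] my; apply/in_M; split => //; first lia.
by rewrite (_ : top - y = top - x + (x - y)); [exact: inS_add | lia].
Qed.

Lemma top_pivot : is_pivot a b m M top.
Proof.
right; split; last by move=> x [j0 [_ [_ [/in_M[_ xtop _] _]]]].
exists (p * b); split; [|split; [|split; first exact: top_in_M]].
- split; first by move: pba; rewrite mulSn; lia.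
  exists (m + p.+1 * b), 0; split; last by rewrite mulSn; lia.
  by apply: window_in_M; [lia | rewrite mulnDr; lia].
- move=> j [ja [x [k [/in_M[mx xtop Sx] xE]]]].
  have Sz : inS a b (top - x + k * a) by apply: inS_add Sx (inS_mul_a a b k).
  have : b + j <= p.+1 * b by apply: (inS_top_window Sz); rewrite ?mulnDr; lia.
  by rewrite mulSn; lia.
- by exists (Posz p.+1); lia.
Qed.

Lemma M_shadow : exists t, t < a + b - 1 /\
  forall x, x \in shadow a b m M <-> m <= x <= m + t.
Proof.
exists (p.+1 * b); split; first lia.
move=> x; rewrite /shadow !inE; split.
- case/andP=> /in_M[mx xtop Sx] xab; apply/andP; split => //.
  have : x - m <= p.+1 * b by apply: (inS_top_window Sx); rewrite ?mulnDr; lia.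
  lia.
- case/andP=> mx xt; apply/andP; split; last lia.
  by apply: window_in_M => //; rewrite mulnDr; lia.
Qed.

Lemma M_no_extension s r : s \notin M ->
  amenable a b c m (M `|` [fset s]) r ->
  shadow a b m (M `|` [fset s]) = shadow a b m M -> False.
Proof.
move=> sM [_ [_ [_ [_ [_ closed]]]]] same_shadow.
have sMs : s \in M `|` [fset s] by rewrite !inE eqxx orbT.
have big : m + a + b <= s.
  rewrite leqNgt; apply/negP=> small.
  have : s \in shadow a b m (M `|` [fset s]) by rewrite /shadow !inE eqxx orbT small.
  by rewrite same_shadow /shadow !inE (negbTE sM).
have below g : a <= g <= a + b -> s - g \in M.
  move=> gen_g; have : s - g \in M `|` [fset s].
    apply: (closed s sMs); last lia.
    split; [apply: inS_ge_m; lia | split; first exact: leq_subr].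
    by rewrite (_ : s - (s - g) = g); [apply/inS_interval; exists 1 | ]; lia.
  by rewrite !inE => /orP[// | /eqP]; lia.
have /in_M[_ sa_top Sa] : s - a \in M by apply: below; lia.
have /in_M[_ _ Sab] : s - (a + b) \in M by apply: below; lia.
have Svb : inS a b (top - (s - a) + b).
  by rewrite (_ : top - (s - a) + b = top - (s - (a + b))) //; lia.
have [av Sv] : a <= top - (s - a) /\ inS a b (top - (s - a) - a).
  by apply: (inS_sub_a b_gt0 pba Sa Svb); rewrite mulnDr; lia.
case/negP: sM; apply/in_M; split; [lia | lia |].
by rewrite (_ : top - s = top - (s - a) - a) //; lia.
Qed.

Lemma M_ordered_amenable : ordered_amenable a b c m M #|` M|.
Proof.
split; first exact: M_amenable.
exists top; split; first exact: top_pivot.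
split; first exact: M_shadow.
by move=> s _ sM ext same; case: (M_no_extension sM ext same).
Qed.

End DivisorSet.

Theorem lemma4p14 (a b : nat) (hb : (0 < b)%N) (hba : (b < a)%N)
  (c : nat) (hc : is_conductor a b c) (m : nat) (hm : (2 * c - 1 <= m)%N)
  (q : nat) (hq : (0 < q)%N) (hqb : (q * b < a)%N)
  (M : {fset nat})
  (hM : forall x, x \in M <-> ((m <= x)%N /\ inD a b (m + q * a + q * b) x)) :
  ordered_amenable a b c m M #|` M|.
Proof.
case: q hq hqb hM => // p _ hpb hM.
exact: M_ordered_amenable hb hpb hc hm hM.
Qed.
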